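(* Let $q$ be a prime power, $l\ge1$, $t=q^l$, $G_6(x)=x^{t+1}+1$, and $L_6=\{\alpha\in GF(t^2):\ G_6(\alpha)\ne0\}$. For every integer $i$ with $1<i<q-1$, the minimum distance of the $q$-ary Goppa code $\Gamma_6^{(i)}=\Gamma(L_6,G_6^{\,i})$ equals $i(t+1)+1$.
   Context: For a set $L=\{\alpha_1,\dots,\alpha_n\}$ of distinct elements of $GF(t^2)$ and $P\in GF(t^2)[x]$ with $P(\alpha_k)\neq0$ for all $k$, the $q$-ary Goppa code is $\Gamma(L,P)=\{c\in GF(q)^n:\ \sum_k \frac{c_k}{x-\alpha_k}\equiv 0 \pmod{P(x)}\}$; its minimum distance is the minimum Hamming weight of a nonzero codeword. *)

From HB Require Import structures.
From mathcomp Require Import all_boot all_order all_algebra all_field.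
Set Implicit Arguments. Unset Strict Implicit. Unset Printing Implicit Defensive.
Import GRing.Theory.
Local Open Scope ring_scope.

(* q-ary Goppa code Gamma(L, P): the locator field F = GF(t^2), the symbol
   field K = GF(q), embedded into F by the field morphism f.
   A word is c : {ffun F -> K} supported on L (coordinates indexed by the
   elements of L). The condition sum_k c_k/(x - a_k) = 0 mod P is expressed
   in F[x]/(P): for a family u of inverses of (x - a) modulo P (a in L),
   P divides sum_{a in L} c_a u_a. *)
Definition goppa_code (K F : finFieldType) (f : {rmorphism K -> F})
  (L : {set F}) (P : {poly F}) (c : {ffun F -> K}) : Prop :=
    (forall a, a \notin L -> c a = 0) /\
    (exists u : F -> {poly F},
          (forall a, a \in L -> P %| ('X - a%:P) * u a - 1) /\
          P %| \sum_(a in L) f (c a) *: u a).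

Definition hweight (K F : finFieldType) (c : {ffun F -> K}) : nat :=
  #|[set a | c a != 0]|.

Definition min_distance (K F : finFieldType) (C : {ffun F -> K} -> Prop) (d : nat) : Prop :=
  (exists2 c, C c & (c != 0) /\ hweight c = d) /\
  (forall c, C c -> c != 0 -> (d <= hweight c)%N).

Definition G6 (F : finFieldType) (t : nat) : {poly F} := 'X^(t.+1) + 1.

Definition L6 (F : finFieldType) (t : nat) : {set F} := [set a | (G6 F t).[a] != 0].

From HB Require Import structures.
From mathcomp Require Import all_boot all_order all_algebra all_field.
From mathcomp Require Import zify.
Set Implicit Arguments. Unset Strict Implicit. Unset Printing Implicit Defensive.
Import GRing.Theory.
Local Open Scope ring_scope.

(* The lower bound is the usual Goppa bound: if c has support S and the
   polynomial P defining the code has no root in L, then P divides the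
   Lagrange sum  \sum_(a in S) c_a \prod_(b in S, b != a) (x - b),  which is
   nonzero of degree < |S|, so |S| > deg P.
   Conversely, pick a set T of i elements of GF(q) other than 0 and -1 and let
   S = {0} u {a | a^(t+1) \in T}.  The norm a |-> a^(t+1) maps GF(t^2)^* onto
   GF(t)^* with fibres of size t+1, so |S| = i(t+1)+1 = deg G^i + 1 and
   \prod_(b in S) (x - b) = x \prod_(s in T) (x^(t+1) - s).  The Lagrange
   interpolant of G^i on S is G^i itself, and its coefficients
   G(a)^i / \prod_(b in S, b != a) (a - b) lie in GF(q), giving a codeword of
   weight |S|. *)

Lemma dvdp_sum (R : idomainType) (I : Type) (r : seq I) (P : pred I)
    (E : I -> {poly R}) (d : {poly R}) :
  (forall i, P i -> d %| E i) -> d %| \sum_(i <- r | P i) E i.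
Proof. by move=> dE; apply: (big_ind (fun q => d %| q)) => //; apply: dvdp_add. Qed.

Section VanishingPoly.
Variable F : finFieldType.
Implicit Types (S : {set F}) (p : {poly F}) (d : F -> F).

Definition vanishing_poly S : {poly F} := \prod_(a in S) ('X - a%:P).

Lemma size_vanishing_poly S : size (vanishing_poly S) = #|S|.+1.
Proof. by rewrite /vanishing_poly -big_enum size_prod_XsubC cardE. Qed.

Lemma monic_vanishing_poly S : vanishing_poly S \is monic.
Proof. exact: monic_prod_XsubC. Qed.

Lemma root_vanishing_poly S x : root (vanishing_poly S) x = (x \in S).
Proof. by rewrite /vanishing_poly -big_enum root_prod_XsubC mem_enum. Qed.

Lemma vanishing_polyD1 S a :
  a \in S -> vanishing_poly S = ('X - a%:P) * vanishing_poly (S :\ a).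
Proof. by move=> aS; rewrite /vanishing_poly (big_setD1 a aS). Qed.

Lemma vanishing_polyD1_neq0 S a : (vanishing_poly (S :\ a)).[a] != 0.
Proof. by rewrite -/(root _ _) root_vanishing_poly !inE eqxx. Qed.

Lemma horner_vanishing_polyD1 S a :
  a \in S -> (vanishing_poly (S :\ a)).[a] = (vanishing_poly S)^`().[a].
Proof.
move=> aS; rewrite (vanishing_polyD1 aS) derivM derivXsubC mul1r.
by rewrite hornerD hornerM hornerXsubC subrr mul0r addr0.
Qed.

Lemma vanishing_polyE S p :
  p \is monic -> size p = #|S|.+1 -> {in S, forall a, root p a} ->
  vanishing_poly S = p.
Proof.
move=> p_monic size_p rootS.
have dvd_p : vanishing_poly S %| p.
  rewrite /vanishing_poly -big_enum; apply: uniq_roots_dvdp.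
    by apply/allP => a; rewrite mem_enum; apply: rootS.
  by rewrite uniq_rootsE enum_uniq.
apply/eqP; rewrite -eqp_monic ?monic_vanishing_poly // -dvdp_size_eqp //.
by rewrite size_vanishing_poly size_p.
Qed.

Lemma coprimep_vanishing_poly p S :
  {in S, forall a, ~~ root p a} -> coprimep p (vanishing_poly S).
Proof.
move=> rootNS; apply: (big_ind (coprimep p)) => [|q r|a aS].
- exact: coprimep1.
- by rewrite coprimepMr => -> ->.
- by rewrite coprimep_XsubC rootNS.
Qed.

Definition lagrange_sum S d : {poly F} :=
  \sum_(a in S) d a *: vanishing_poly (S :\ a).

Lemma horner_lagrange_sum S d b :
  b \in S -> (lagrange_sum S d).[b] = d b * (vanishing_poly (S :\ b)).[b].
Proof.
move=> bS; rewrite horner_sum (big_setD1 b bS) /= hornerZ big1 ?addr0 // => a.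
rewrite !inE => /andP[ab _]; rewrite hornerZ.
have /rootP -> : root (vanishing_poly (S :\ a)) b.
  by rewrite root_vanishing_poly !inE eq_sym ab.
by rewrite mulr0.
Qed.

Lemma size_lagrange_sum S d : (size (lagrange_sum S d) <= #|S|)%N.
Proof.
apply: (leq_trans (size_sum _ _ _)); apply/bigmax_leqP => a aS.
apply: (leq_trans (size_scale_leq _ _)).
by rewrite size_vanishing_poly (cardsD1 a S) aS.
Qed.

Lemma lagrange_sum_interpolates S d p :
  (size p <= #|S|)%N ->
  {in S, forall a, d a * (vanishing_poly (S :\ a)).[a] = p.[a]} ->
  lagrange_sum S d = p.
Proof.
move=> size_p dS; apply/eqP; rewrite -subr_eq0; apply/eqP.
apply: (@roots_geq_poly_eq0 _ _ (enum S)); last 2 first.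
- exact: enum_uniq.
- rewrite -cardE (leq_trans (size_polyD _ _)) // geq_max size_lagrange_sum.
  by rewrite size_polyN.
apply/allP => b; rewrite mem_enum => bS.
by rewrite rootE hornerD hornerN horner_lagrange_sum // dS // subrr.
Qed.

End VanishingPoly.

Section GoppaCode.
Variables (K F : finFieldType) (f : {rmorphism K -> F}).
Variables (L : {set F}) (P : {poly F}).

Lemma goppa_inverses_exist :
  {in L, forall a, ~~ root P a} ->
  exists u : F -> {poly F}, forall a, a \in L -> P %| ('X - a%:P) * u a - 1.
Proof.
move=> rootNL; apply: (@fin_all_exists _ (fun _ => {poly F})
  (fun a v => a \in L -> P %| ('X - a%:P) * v - 1)) => a.
have [aL|_] := boolP (a \in L); last by exists 0.
have : coprimep ('X - a%:P) P by rewrite coprimep_sym coprimep_XsubC rootNL.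
case/Bezout_eq1_coprimepP => -[v w] /= vw1; exists v => _.
have -> : ('X - a%:P) * v - 1 = - (w * P).
  by rewrite -vw1 mulrC opprD addrA subrr add0r.
by rewrite dvdpNr dvdp_mull.
Qed.

Lemma goppa_syndrome_lagrange (u : F -> {poly F}) (S : {set F}) (c : F -> F) :
  (forall a, a \in L -> P %| ('X - a%:P) * u a - 1) ->
  S \subset L -> {in L, forall a, a \notin S -> c a = 0} ->
  P %| vanishing_poly S * (\sum_(a in L) c a *: u a) - lagrange_sum S c.
Proof.
move=> uP SL cS.
have -> : \sum_(a in L) c a *: u a = \sum_(a in S) c a *: u a.
  rewrite (big_setID S) /= (setIidPr SL) [X in _ + X]big1 ?addr0 // => a.
  by rewrite !inE => /andP[aNS aL]; rewrite cS ?scale0r.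
rewrite mulr_sumr -sumrB; apply: dvdp_sum => a aS.
rewrite (vanishing_polyD1 aS) -scalerAr -scalerBr -mulrA mulrCA.
rewrite -[X in _ - X]mulr1 -mulrBr -mul_polyC !dvdp_mull // uP //.
exact: (subsetP SL).
Qed.

Lemma goppa_code_weight_ge (c : {ffun F -> K}) :
  goppa_code f L P c -> c != 0 -> (size P <= hweight c)%N.
Proof.
move=> [c_supp [u [uP P_dvd]]] c_neq0.
set S := [set a | c a != 0].
have SL : S \subset L.
  by apply/subsetP => a; rewrite inE; apply: contraR => aNL; rewrite c_supp.
have cS : {in L, forall a, a \notin S -> f (c a) = 0}.
  by move=> a _; rewrite inE negbK => /eqP ->; rewrite rmorph0.
have := goppa_syndrome_lagrange uP SL cS.
rewrite (dvdp_subr _ (dvdp_mull _ P_dvd)) => P_dvd_lagrange.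
have [b bS] : exists b, b \in S.
  apply/existsP; apply: contraNT c_neq0 => /existsPn Sempty.
  by apply/eqP/ffunP => a; have := Sempty a; rewrite inE negbK ffunE => /eqP.
apply: leq_trans (dvdp_leq _ P_dvd_lagrange) (size_lagrange_sum _ _).
apply/eqP => lagrange0; have := horner_lagrange_sum (fun a => f (c a)) bS.
rewrite lagrange0 horner0 => /esym/eqP; rewrite mulf_eq0.
rewrite (negbTE (vanishing_polyD1_neq0 _ _)) orbF fmorph_eq0.
by move: bS; rewrite inE => /negbTE ->.
Qed.

Lemma goppa_code_lagrange (S : {set F}) :
  S \subset L -> {in L, forall a, ~~ root P a} -> (size P <= #|S|)%N ->
  {in S, forall a, exists k, f k * (vanishing_poly (S :\ a)).[a] = P.[a]} ->
  exists2 c, goppa_code f L P c & hweight c = #|S|.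
Proof.
move=> SL rootNL size_P interpS.
have [g gS] : exists g : F -> K,
    forall a, a \in S -> f (g a) * (vanishing_poly (S :\ a)).[a] = P.[a].
  apply: (@fin_all_exists _ (fun _ => K)
    (fun a k => a \in S -> f k * (vanishing_poly (S :\ a)).[a] = P.[a])) => a.
  by have [aS|_] := boolP (a \in S); [have [k] := interpS a aS; exists k|exists 0].
pose c := [ffun a => if a \in S then g a else 0].
have c_supp : {in L, forall a, a \notin S -> f (c a) = 0}.
  by move=> a _ aNS; rewrite ffunE (negbTE aNS) rmorph0.
have supp_c : [set a | c a != 0] = S.
  apply/setP => a; rewrite inE ffunE; case: ifPn => [aS|_]; last by rewrite eqxx.
  apply: contraTneq (rootNL a (subsetP SL a aS)) => ga0.
  by rewrite negbK rootE -gS // ga0 rmorph0 mul0r.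
exists c; last by rewrite /hweight supp_c.
split=> [a aNL|].
  by rewrite ffunE; case: ifP => // /(subsetP SL); rewrite (negbTE aNL).
have [u uP] := goppa_inverses_exist rootNL.
exists u; split=> //.
have := goppa_syndrome_lagrange uP SL c_supp.
rewrite (lagrange_sum_interpolates size_P) => [|a aS]; last by rewrite ffunE aS gS.
rewrite (dvdp_subl _ (dvdpp P)) Gauss_dvdpr //.
by apply: coprimep_vanishing_poly => a /(subsetP SL); apply: rootNL.
Qed.

End GoppaCode.

Lemma card_preimset_sum (T U : finType) (g : T -> U) (B : {set U}) :
  #|g @^-1: B| = (\sum_(y in B) #|g @^-1: [set y]|)%N.
Proof.
rewrite -sum1_card (partition_big g (mem B)) => [|x]; last by rewrite inE.
apply: eq_bigr => y yB; rewrite -sum1_card; apply: eq_bigl => x.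
by rewrite !inE andbC; case: eqP => // ->.
Qed.

Lemma card_preimset1_eq (T U : finType) (g : T -> U) (B : {set U}) m :
  {in B, forall y, #|g @^-1: [set y]| <= m}%N -> (m * #|B| <= #|g @^-1: B|)%N ->
  {in B, forall y, #|g @^-1: [set y]| = m}.
Proof.
move=> fibre_le card_ge.
have /leqif_sum[le_sum eq_sum] : forall y, y \in B ->
    (#|g @^-1: [set y]| <= m ?= iff (#|g @^-1: [set y]| == m))%N.
  by move=> y yB; apply/leqif_eq/fibre_le.
have : [forall (y | y \in B), #|g @^-1: [set y]| == m].
  rewrite -eq_sum -card_preimset_sum sum_nat_const mulnC eqn_leq card_ge andbT.
  by rewrite -card_preimset_sum sum_nat_const mulnC in le_sum.
by move=> /forallP all_eq y yB; apply/eqP; have := all_eq y; rewrite yB.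
Qed.

Lemma card_roots_XnsubC (F : finFieldType) n (y : F) :
  (0 < n)%N -> (#|[set a : F | a ^+ n == y]| <= n)%N.
Proof.
move=> n_gt0; have Xny_neq0 : 'X^n - y%:P != 0 by rewrite -size_poly_eq0 size_XnsubC.
rewrite cardE -ltnS -(size_XnsubC y n_gt0).
apply: max_poly_roots Xny_neq0 _ (enum_uniq _).
by apply/allP => a; rewrite mem_enum inE rootE !hornerE subr_eq0.
Qed.

Lemma card_norm_fibre (F : finFieldType) (t : nat) (tau : F) :
  #|F| = (t ^ 2)%N -> tau != 0 -> tau ^+ t = tau ->
  #|[set a : F | a ^+ t.+1 == tau]| = t.+1.
Proof.
move=> cardF tau_neq0 tau_frob.
have t_gt1 : (1 < t)%N.
  by have := card_finNzRing_gt1 F; rewrite cardF -(exp1n 2) ltn_exp2r.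
pose norm (a : F) := a ^+ t.+1.
set U := [set y : F | (y != 0) && (y ^+ t.-1 == 1)].
have norm_unit : [set~ 0] \subset norm @^-1: U.
  apply/subsetP => a; rewrite !inE => a_neq0; rewrite expf_neq0 //= -exprM.
  have := expf_card a; rewrite cardF.
  have -> : (t ^ 2 = (t.+1 * t.-1).+1)%N by rewrite expnS expn1; lia.
  by rewrite exprS => /(congr1 ( *%R a^-1)); rewrite mulKf // mulVf // => ->.
have fibre_le : {in U, forall y, #|norm @^-1: [set y]| <= t.+1}%N.
  move=> y _; apply: leq_trans (card_roots_XnsubC y (ltn0Sn t)).
  by apply/subset_leq_card/subsetP => a; rewrite !inE.
have card_U : (#|U| <= t.-1)%N.
  apply: leq_trans (card_roots_XnsubC 1 _); last by lia.
  by apply/subset_leq_card/subsetP => y; rewrite !inE => /andP[].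
have tau_U : tau \in U.
  rewrite inE tau_neq0 /=; apply/eqP/(mulfI tau_neq0).
  by rewrite mulr1 -exprS prednK ?tau_frob //; lia.
rewrite -[RHS](card_preimset1_eq fibre_le _ tau_U).
  by apply: eq_card => a; rewrite !inE.
apply: leq_trans (subset_leq_card norm_unit); rewrite cardsC1 cardF.
apply: leq_trans (leq_mul (leqnn _) card_U) _; rewrite expnS expn1; lia.
Qed.

Lemma size_G6_exp (F : finFieldType) (t i : nat) :
  size (G6 F t ^+ i) = (i * t.+1).+1.
Proof.
have G6_monic : G6 F t \is monic by rewrite /G6 -polyC1 monicXnaddC.
rewrite (polySpred (monic_neq0 (monic_exp i G6_monic))) size_exp.
by rewrite /G6 -polyC1 size_XnaddC // mulnC.
Qed.

Section NormPreimage.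
Variables (K F : finFieldType) (f : {rmorphism K -> F}) (t : nat) (T : {set K}).
Hypotheses (cardF : #|F| = (t ^ 2)%N) (t_eq0 : t%:R = 0 :> F).
Hypotheses (T_frob : {in T, forall s, f s ^+ t = f s}).
Hypotheses (T_neq0 : 0 \notin T) (T_neqN1 : -1 \notin T).

Definition norm_preimage : {set F} := 0 |: [set a | a ^+ t.+1 \in f @: T].

Definition norm_poly : {poly F} := \prod_(s in T) ('X^(t.+1) - (f s)%:P).

Lemma norm_preimageP a :
  reflect (a = 0 \/ exists2 s, s \in T & a ^+ t.+1 = f s) (a \in norm_preimage).
Proof.
rewrite !inE; apply: (iffP orP) => [[/eqP|/imsetP[s sT ->]]|[->|[s sT ->]]].
- by left.
- by right; exists s.
- by left.
- by right; apply: imset_f.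
Qed.

Lemma card_norm_preimage : #|norm_preimage| = (#|T| * t.+1).+1.
Proof.
rewrite cardsU1 inE expr0n /=.
have /negPf-> : (0 : F) \notin f @: T.
  apply/imsetP => -[s sT /esym/eqP]; rewrite fmorph_eq0 => /eqP s0.
  by move: T_neq0; rewrite -s0 sT.
rewrite add1n (card_preimset_sum (fun a : F => a ^+ t.+1)).
rewrite -(card_imset _ (fmorph_inj f)) -sum_nat_const; congr _.+1.
apply: eq_bigr => _ /imsetP[s sT ->].
have fs_neq0 : f s != 0 by rewrite fmorph_eq0; apply: contraNneq T_neq0 => <-.
rewrite -[RHS](card_norm_fibre cardF fs_neq0 (T_frob sT)).
by apply: eq_card => a; rewrite !inE.
Qed.

Lemma monic_norm_poly : norm_poly \is monic.
Proof. by apply: monic_prod => s _; apply: monicXnsubC. Qed.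

Lemma size_norm_poly : size norm_poly = (#|T| * t.+1).+1.
Proof.
rewrite size_prod => [|s _]; last by rewrite -size_poly_eq0 size_XnsubC.
rewrite (eq_bigr (fun _ => t.+2)) => [|s _]; last by rewrite size_XnsubC.
by rewrite sum_nat_const -[X in (_ - X)%N]/#|T|; lia.
Qed.

Lemma vanishing_norm_preimage : vanishing_poly norm_preimage = 'X * norm_poly.
Proof.
apply: vanishing_polyE.
- by rewrite monicMr ?monicX ?monic_norm_poly.
- rewrite mulrC size_mulX ?monic_neq0 ?monic_norm_poly //.
  by rewrite size_norm_poly card_norm_preimage.
move=> a /norm_preimageP[->|[s sT es]]; first by rewrite rootM rootX eqxx.
rewrite rootM; apply/orP; right; rewrite rootE horner_prod.
by apply/prodf_eq0; exists s => //; rewrite !hornerE es subrr.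
Qed.

(* With V = 'X * norm_poly, the value is V'(a) = norm_poly(a) + a norm_poly'(a);
   for a != 0 only the factor of norm_poly vanishing at a survives
   differentiation, and its derivative at a is (t+1) a^t = a^t as t = 0 in F. *)
Lemma horner_vanishing_norm_preimageD1 a :
  a \in norm_preimage -> exists k, f k = (vanishing_poly (norm_preimage :\ a)).[a].
Proof.
move=> aS; rewrite horner_vanishing_polyD1 // vanishing_norm_preimage.
rewrite derivM derivX mul1r hornerD hornerM hornerX.
case/norm_preimageP: aS => [->|[s sT es]].
  exists (\prod_(s in T) - s); rewrite mul0r addr0 rmorph_prod horner_prod.
  by apply: eq_bigr => s _; rewrite !hornerE expr0n /= sub0r rmorphN.
exists (s * \prod_(r in T :\ s) (s - r)).
rewrite /norm_poly (big_setD1 s sT) /= derivM derivB derivXn derivC subr0.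
rewrite !(hornerD, hornerM, hornerN, hornerC, hornerXn, hornerMn) es subrr.
rewrite !mul0r add0r addr0 mulrSr -mulr_natr t_eq0 mulr0 add0r mulrA -exprS es.
rewrite rmorphM rmorph_prod horner_prod; congr (_ * _); apply: eq_bigr => r _.
by rewrite !hornerE es rmorphB.
Qed.

Lemma horner_G6_norm_preimage a :
  a \in norm_preimage -> exists2 k, k != 0 & f k = (G6 F t).[a].
Proof.
rewrite /G6 => /norm_preimageP[->|[s sT es]].
  by exists 1; rewrite ?oner_eq0 // rmorph1 !hornerE expr0n add0r.
exists (s + 1); last by rewrite !hornerE es rmorphD rmorph1.
by rewrite addr_eq0; apply: contraNneq T_neqN1 => <-.
Qed.

Lemma norm_preimage_goppa_word :
  exists2 c, goppa_code f (L6 F t) (G6 F t ^+ #|T|) c & hweight c = (#|T| * t.+1).+1.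
Proof.
rewrite -card_norm_preimage; apply: goppa_code_lagrange.
- apply/subsetP => a /horner_G6_norm_preimage[k k_neq0 Gk].
  by rewrite inE -Gk fmorph_eq0.
- by move=> a; rewrite inE rootE horner_exp expf_eq0 => /negPf->; rewrite andbF.
- by rewrite size_G6_exp card_norm_preimage.
move=> a aS; have [k k_neq0 Gk] := horner_G6_norm_preimage aS.
have [v Vv] := horner_vanishing_norm_preimageD1 aS.
have v_neq0 : v != 0 by rewrite -(fmorph_eq0 f) Vv vanishing_polyD1_neq0.
exists (k ^+ #|T| / v).
by rewrite fmorph_div rmorphXn Vv divfK ?horner_exp ?Gk // -Vv fmorph_eq0.
Qed.

End NormPreimage.

Lemma subset_card_eq (T : finType) (A : {set T}) n :
  (n <= #|A|)%N -> exists2 B : {set T}, B \subset A & #|B| = n.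
Proof.
case/card_geqP => s [s_uniq size_s s_sub]; exists [set x in s].
  by apply/subsetP => x; rewrite inE => /s_sub.
by rewrite cardsE (card_uniqP s_uniq).
Qed.

Lemma expf_cardX (K : finFieldType) (x : K) l : x ^+ (#|K| ^ l) = x.
Proof. by elim: l => [|l IHl]; rewrite ?expr1 // expnSr exprM IHl expf_card. Qed.

Unset Implicit Arguments.
Set Strict Implicit.

Theorem theorem1 (p k l : nat) (K F : finFieldType) (f : {rmorphism K -> F}) (i : nat) :
  prime p -> (0 < k)%N -> (1 <= l)%N ->
  #|K| = (p ^ k)%N -> #|F| = (((p ^ k) ^ l) ^ 2)%N ->
  (1 < i)%N -> (i < (p ^ k).-1)%N ->
  min_distance (goppa_code f (L6 F ((p ^ k) ^ l)) (G6 F ((p ^ k) ^ l) ^+ i))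
               (i * ((p ^ k) ^ l).+1).+1.
Proof.
move=> p_prime k_gt0 l_gt0 cardK cardF _ i_lt.
set q := (p ^ k)%N in cardK cardF i_lt *; set t := (q ^ l)%N in cardF *.
have t_eq0 : t%:R = 0 :> F.
  have p_char : p \in [pchar F].
    apply: (card_finPcharP (n := (k * l * 2)%N)) => //.
    by rewrite cardF /t /q -!expnM mulnA.
  rewrite /t /q -expnM natrX (pcharf0 p_char) expr0n.
  by have /negPf-> : (k * l != 0)%N by rewrite muln_eq0 negb_or -!lt0n k_gt0.
have [T T_units card_T] : exists2 T : {set K}, T \subset [set~ 0] :\ -1 & #|T| = i.
  apply: subset_card_eq.
  have := cardsD1 (-1) [set~ (0 : K)]; rewrite cardsC1 cardK !inE oppr_eq0 oner_eq0 /=.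
  by move=> q_eq; move: i_lt; rewrite q_eq add1n ltnS.
have T_frob : {in T, forall s, f s ^+ t = f s}.
  by move=> s _; rewrite -rmorphXn /t -cardK expf_cardX.
have T_neq0 : 0 \notin T by apply/negP => /(subsetP T_units); rewrite !inE eqxx andbF.
have T_neqN1 : -1 \notin T by apply/negP => /(subsetP T_units); rewrite !inE eqxx.
have [c c_code weight_c] := norm_preimage_goppa_word cardF t_eq0 T_frob T_neq0 T_neqN1.
rewrite card_T in c_code weight_c; split.
  exists c => //; split=> //; apply: contra_eq_neq weight_c => ->.
  rewrite /hweight (_ : [set a | _] = set0) ?cards0 //.
  by apply/setP => a; rewrite !inE ffunE eqxx.
move=> c' c'_code c'_neq0; rewrite -(size_G6_exp F).
exact: goppa_code_weight_ge c'_code c'_neq0.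
Qed.
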